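(* Let $\{x_k\}_{k\ge 0}$ be a log-convex sequence and define $z_n=\sum_{k=0}^{n}S(n,k)x_k$ for $n\ge 0$. Then $\{z_n\}_{n\ge 0}$ is log-convex. That is, the Stirling transformation of the second kind preserves log-convexity.
   Context: $S(n,k)$ denotes the Stirling number of the second kind: the number of partitions of $\{1,\dots,n\}$ into exactly $k$ blocks, with $S(0,0)=1$ and $S(n,k)=0$ unless $0\le k\le n$. A sequence $a_0,a_1,\ldots$ of nonnegative real numbers is log-convex if $a_{k-1}a_{k+1}\ge a_k^2$ for all $k\ge 1$. *)

From mathcomp Require Import all_boot all_order all_algebra.
Set Implicit Arguments. Unset Strict Implicit. Unset Printing Implicit Defensive.
Import Order.TTheory GRing.Theory Num.Theory.
Local Open Scope ring_scope.

Fixpoint stirling2 (n k : nat) {struct n} : nat :=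
  match n, k with
  | 0, 0 => 1
  | 0, _.+1 => 0
  | _.+1, 0 => 0
  | n'.+1, k'.+1 => (k'.+1 * stirling2 n' k'.+1 + stirling2 n' k')%N
  end.

Definition log_convex (R : realFieldType) (a : nat -> R) : Prop :=
  (forall k, 0 <= a k) /\ (forall k, (1 <= k)%N -> a k ^+ 2 <= a k.-1 * a k.+1).

Definition stirling2_transform (R : realFieldType) (x : nat -> R) (n : nat) : R :=
  \sum_(0 <= k < n.+1) (stirling2 n k)%:R * x k.

From mathcomp Require Import all_boot all_order all_algebra.
From mathcomp Require Import ring lra.
Set Implicit Arguments.
Unset Strict Implicit.
Unset Printing Implicit Defensive.
Import Order.TTheory GRing.Theory Num.Theory.
Local Open Scope ring_scope.

(* Writing z_n for the transform, the recurrence of S(n,k) gives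
   z_(n+1) = sum_k S(n,k) y_k with y_k = k x_k + x_(k+1).  Hence
   z_n z_(n+2) - z_(n+1)^2 is a Cauchy-Binet combination of the 2x2 minors of
   the two-row matrices (S(n,.), S(n+1,.)) and (x, y), and all of these minors
   are nonnegative: for the Stirling rows by induction on n, for (x, y) by
   log-convexity of x. *)

Lemma stirling2_eq0 n k : (n < k)%N -> stirling2 n k = 0%N.
Proof.
elim: n k => [|n IHn] [|k] //= ltnk.
by rewrite !IHn ?muln0 // ltnW.
Qed.

Lemma stirling2SS n k :
  stirling2 n.+1 k.+1 = (k.+1 * stirling2 n k.+1 + stirling2 n k)%N.
Proof. by []. Qed.

(* TP2: every 2x2 minor of the two-row matrix with rows a and b is nonnegative. *)
Definition tp2 {R : numDomainType} (a b : nat -> R) : Prop :=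
  forall i j, (i <= j)%N -> a j * b i <= a i * b j.

Section TotalPositivity.
Context {R : realDomainType}.
Implicit Types a b c : nat -> R.

Lemma tp2_addr a b c : tp2 a b -> tp2 a c -> tp2 a (fun k => b k + c k).
Proof. by move=> ab ac i j le_ij; rewrite !mulrDr lerD ?ab ?ac. Qed.

Lemma tp2_natmul a : (forall k, 0 <= a k) -> tp2 a (fun k => k%:R * a k).
Proof.
move=> a_ge0 i j le_ij.
by rewrite mulrCA [leRHS]mulrCA [a j * _]mulrC ler_wpM2r ?mulr_ge0 ?ler_nat.
Qed.

Lemma tp2_stirling2_step a b a' b' :
  a' 0%N = 0 -> b' 0%N = 0 ->
  (forall k, a' k.+1 = k.+1%:R * a k.+1 + a k) ->
  (forall k, b' k.+1 = k.+1%:R * b k.+1 + b k) ->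
  tp2 a b -> tp2 a' b'.
Proof.
move=> a'0 b'0 a'S b'S ab [|i] [|j]; rewrite ?a'0 ?b'0 ?mul0r ?mulr0 //.
rewrite a'S b'S a'S b'S ltnS.
rewrite leq_eqVlt => /predU1P[-> // | lt_ij].
have := ab i j (ltnW lt_ij).
have := ler_wpM2l (ler0n R (j.+1 * i.+1)) (ab i.+1 j.+1 (ltnW lt_ij)).
have := ler_wpM2l (ler0n R j.+1) (ab i j.+1 (leqW (ltnW lt_ij))).
have := ler_wpM2l (ler0n R i.+1) (ab i.+1 j lt_ij).
rewrite natrM; lra.
Qed.

Lemma tp2_cauchy_binet N a1 a2 b1 b2 : tp2 a1 a2 -> tp2 b1 b2 ->
  (\sum_(0 <= k < N) a1 k * b2 k) * (\sum_(0 <= k < N) a2 k * b1 k)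
  <= (\sum_(0 <= k < N) a1 k * b1 k) * (\sum_(0 <= k < N) a2 k * b2 k).
Proof.
move=> a12 b12.
set S11 := \sum_(0 <= k < N) a1 k * b1 k; set S22 := \sum_(0 <= k < N) a2 k * b2 k.
set S12 := \sum_(0 <= k < N) a1 k * b2 k; set S21 := \sum_(0 <= k < N) a2 k * b1 k.
pose minor (f g : nat -> R) i j := f i * g j - f j * g i.
have minors_ge0 (i j : nat) : 0 <= minor a1 a2 i j * minor b1 b2 i j.
  rewrite /minor; have [le_ij|lt_ji] := leqP i j.
    by apply: mulr_ge0; rewrite subr_ge0 ?a12 ?b12.
  have := a12 _ _ (ltnW lt_ji); have := b12 _ _ (ltnW lt_ji); nra.
have row_sum i : \sum_(0 <= j < N) minor a1 a2 i j * minor b1 b2 i j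
    = a1 i * b1 i * S22 - a1 i * b2 i * S21 - a2 i * b1 i * S12 + a2 i * b2 i * S11.
  rewrite /S11 /S12 /S21 /S22 !mulr_sumr -!sumrB -big_split /=.
  by apply: eq_bigr => j _; rewrite /minor; ring.
have double_sum : \sum_(0 <= i < N) \sum_(0 <= j < N) minor a1 a2 i j * minor b1 b2 i j
    = 2 * (S11 * S22 - S12 * S21).
  rewrite (eq_bigr _ (fun i _ => row_sum i)) !(big_split, sumrB) /= !sumrN.
  by rewrite -!mulr_suml -/S11 -/S12 -/S21 -/S22; ring.
have : 0 <= 2 * (S11 * S22 - S12 * S21).
  by rewrite -double_sum; do 2!apply: sumr_ge0 => ? _.
lra.
Qed.

End TotalPositivity.

Lemma stirling2_tp2 (R : realDomainType) n :
  tp2 (fun k => (stirling2 n k)%:R : R) (fun k => (stirling2 n.+1 k)%:R).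
Proof.
elim: n => [|n IHn].
  move=> i [|j] le_ij; first by case: i le_ij.
  by rewrite mul0r mulr_ge0.
by apply: (tp2_stirling2_step _ _ _ _ IHn) => // k; rewrite stirling2SS natrD natrM.
Qed.

Section Transform.
Variables (R : realFieldType) (x : nat -> R).

Lemma stirling2_transformE n N : (n < N)%N ->
  stirling2_transform x n = \sum_(0 <= k < N) (stirling2 n k)%:R * x k.
Proof.
move=> ltnN; rewrite /stirling2_transform -(subnKC ltnN).
elim: (N - n.+1)%N => [|d IHd]; first by rewrite addn0.
by rewrite addnS [in RHS]big_nat_recr // -IHd /= stirling2_eq0 ?mul0r ?addr0 // ltn_addr.
Qed.

Lemma stirling2_transformS n :
  stirling2_transform x n.+1 = stirling2_transform (fun k => k%:R * x k + x k.+1) n.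
Proof.
rewrite /stirling2_transform big_nat_recl // (_ : stirling2 n.+1 0 = 0%N) //.
rewrite mul0r add0r.
under eq_bigr do rewrite stirling2SS natrD natrM mulrDl.
under [in RHS]eq_bigr do rewrite mulrDr.
rewrite !big_split /=; congr (_ + _).
rewrite big_nat_recr //= [in RHS]big_nat_recl //= stirling2_eq0 //.
rewrite !(mul0r, mulr0, addr0, add0r).
by apply: eq_bigr => i _; rewrite mulrCA mulrA.
Qed.

Lemma log_convex_tp2 : log_convex x -> tp2 x (fun k => x k.+1).
Proof.
move=> [x_ge0 x_lc] i j le_ij; rewrite -(subnKC le_ij).
elim: (j - i)%N => [|d IHd]; first by rewrite addn0 mulrC.
rewrite addnS; set k := (i + d)%N in IHd *.
have [->|xk1_neq0] := eqVneq (x k.+1) 0; first by rewrite mul0r mulr_ge0.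
have xk1_gt0 : 0 < x k.+1 by rewrite lt0r xk1_neq0 x_ge0.
rewrite -(ler_pM2l xk1_gt0) mulrA -expr2.
apply: le_trans (ler_wpM2r (x_ge0 _) (x_lc k.+1 isT)) _.
have := ler_wpM2l (x_ge0 k.+2) IHd; lra.
Qed.

End Transform.

Theorem mainTheorem2 (R : realFieldType) (x : nat -> R) :
  log_convex x -> log_convex (stirling2_transform x).
Proof.
move=> x_lc; have [x_ge0 _] := x_lc; split.
  by move=> n; apply: sumr_ge0 => k _; rewrite mulr_ge0.
case=> [|m] // _ /=.
have x_tp2 : tp2 x (fun k => k%:R * x k + x k.+1).
  exact: tp2_addr (tp2_natmul x_ge0) (log_convex_tp2 x_lc).
have := tp2_cauchy_binet m.+2 (stirling2_tp2 R m) x_tp2.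
by rewrite -!stirling2_transformE // -!stirling2_transformS expr2.
Qed.
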